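(* At every point of the set $\mathcal{RS}\cap\{1-Z_1\ge0\}\cap\{F_2=0\}\cap\{Z_2-Z_3\ge0\}\cap\{X_1\ge0\}$ (with $Z_1>0$, so that $F_2$ is defined) one has $\langle\nabla F_2,V\rangle\ge0$.
   Context: Fix an integer $m\ge1$, $n=4m+3$ and $\epsilon\in\{0,1\}$. On $\mathbb R^8$ with coordinates $(X_1,X_2,X_3,Z_1,Z_2,Z_3,Z_4,W)$ set $G=X_1^2+2X_2^2+4mX_3^2$, $H=X_1+2X_2+4mX_3$, $R_1=2Z_1Z_2+4mZ_1Z_3$, $R_2=4Z_2-2Z_1Z_2+4mZ_3$, $R_3=(4m+8)Z_4-2Z_1Z_3-4Z_3$, $R_s=R_1+2R_2+4mR_3$, $Q=G+R_s+(n-1)\frac\epsilon2W-1$. $V$ is the vector field with components $V_{X_i}=X_i(G-\frac\epsilon2W-1)+R_i+\frac\epsilon2W$ ($i=1,2,3$), $V_{Z_1}=2Z_1(X_1-X_2)$, $V_{Z_2}=2Z_2(G-\frac\epsilon2W-X_2)$, $V_{Z_3}=2Z_3(G-\frac\epsilon2W+X_2-2X_3)$, $V_{Z_4}=2Z_4(G-\frac\epsilon2W-X_3)$, $V_W=2W(G-\frac\epsilon2W)$. $\mathcal{RS}=\{Q\le0\}\cap\{H\le1\}\cap\{W\ge0\}\cap\{Z_1,Z_2,Z_3,Z_4\ge0\}\cap\{Z_4^2=Z_2Z_3\}$. For a constant $l$ and $Z_1>0$, $F_l=X_2-X_1+l\left(\sqrt{Z_2/Z_1}-\sqrt{Z_1Z_2}\right)$.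 *)

From Stdlib Require Import Reals.
From Coquelicot Require Import Coquelicot.
Open Scope R_scope.

(* Parameters: m : nat (m >= 1), n = 4m+3, eps in {0,1} (as a real).
   Coordinates (X1,X2,X3,Z1,Z2,Z3,Z4,W). *)

Definition nR (m : nat) : R := 4 * INR m + 3.

Definition Gf (m : nat) (X1 X2 X3 : R) : R :=
  X1^2 + 2 * X2^2 + 4 * INR m * X3^2.

Definition Hf (m : nat) (X1 X2 X3 : R) : R :=
  X1 + 2 * X2 + 4 * INR m * X3.

Definition R1f (m : nat) (Z1 Z2 Z3 : R) : R :=
  2 * Z1 * Z2 + 4 * INR m * Z1 * Z3.

Definition R2f (m : nat) (Z1 Z2 Z3 : R) : R :=
  4 * Z2 - 2 * Z1 * Z2 + 4 * INR m * Z3.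

Definition R3f (m : nat) (Z1 Z3 Z4 : R) : R :=
  (4 * INR m + 8) * Z4 - 2 * Z1 * Z3 - 4 * Z3.

Definition Rsf (m : nat) (Z1 Z2 Z3 Z4 : R) : R :=
  R1f m Z1 Z2 Z3 + 2 * R2f m Z1 Z2 Z3 + 4 * INR m * R3f m Z1 Z3 Z4.

Definition Qf (m : nat) (eps : R) (X1 X2 X3 Z1 Z2 Z3 Z4 W : R) : R :=
  Gf m X1 X2 X3 + Rsf m Z1 Z2 Z3 Z4 + (nR m - 1) * (eps / 2) * W - 1.

Definition VX1 m eps (X1 X2 X3 Z1 Z2 Z3 Z4 W : R) : R :=
  X1 * (Gf m X1 X2 X3 - eps / 2 * W - 1) + R1f m Z1 Z2 Z3 + eps / 2 * W.
Definition VX2 m eps (X1 X2 X3 Z1 Z2 Z3 Z4 W : R) : R :=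
  X2 * (Gf m X1 X2 X3 - eps / 2 * W - 1) + R2f m Z1 Z2 Z3 + eps / 2 * W.
Definition VX3 m eps (X1 X2 X3 Z1 Z2 Z3 Z4 W : R) : R :=
  X3 * (Gf m X1 X2 X3 - eps / 2 * W - 1) + R3f m Z1 Z3 Z4 + eps / 2 * W.
Definition VZ1 (m : nat) (eps : R) (X1 X2 X3 Z1 Z2 Z3 Z4 W : R) : R :=
  2 * Z1 * (X1 - X2).
Definition VZ2 m eps (X1 X2 X3 Z1 Z2 Z3 Z4 W : R) : R :=
  2 * Z2 * (Gf m X1 X2 X3 - eps / 2 * W - X2).
Definition VZ3 m eps (X1 X2 X3 Z1 Z2 Z3 Z4 W : R) : R :=
  2 * Z3 * (Gf m X1 X2 X3 - eps / 2 * W + X2 - 2 * X3).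
Definition VZ4 m eps (X1 X2 X3 Z1 Z2 Z3 Z4 W : R) : R :=
  2 * Z4 * (Gf m X1 X2 X3 - eps / 2 * W - X3).
Definition VW m eps (X1 X2 X3 Z1 Z2 Z3 Z4 W : R) : R :=
  2 * W * (Gf m X1 X2 X3 - eps / 2 * W).

Definition inRS (m : nat) (eps : R) (X1 X2 X3 Z1 Z2 Z3 Z4 W : R) : Prop :=
  Qf m eps X1 X2 X3 Z1 Z2 Z3 Z4 W <= 0 /\
  Hf m X1 X2 X3 <= 1 /\
  0 <= W /\
  0 <= Z1 /\ 0 <= Z2 /\ 0 <= Z3 /\ 0 <= Z4 /\
  Z4^2 = Z2 * Z3.

(* F_l as a function of all 8 coordinates (it only depends on X1,X2,Z1,Z2);
   meaningful for Z1 > 0. *)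
Definition Ff (l : R) (X1 X2 X3 Z1 Z2 Z3 Z4 W : R) : R :=
  X2 - X1 + l * (sqrt (Z2 / Z1) - sqrt (Z1 * Z2)).

(* <grad F, V> at a point, realised as the derivative at t = 0 of
   t |-> F(p + t V(p)). *)
Definition dirF (m : nat) (eps l : R) (X1 X2 X3 Z1 Z2 Z3 Z4 W : R) : R -> R :=
  fun t =>
    Ff l (X1 + t * VX1 m eps X1 X2 X3 Z1 Z2 Z3 Z4 W)
         (X2 + t * VX2 m eps X1 X2 X3 Z1 Z2 Z3 Z4 W)
         (X3 + t * VX3 m eps X1 X2 X3 Z1 Z2 Z3 Z4 W)
         (Z1 + t * VZ1 m eps X1 X2 X3 Z1 Z2 Z3 Z4 W)
         (Z2 + t * VZ2 m eps X1 X2 X3 Z1 Z2 Z3 Z4 W)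
         (Z3 + t * VZ3 m eps X1 X2 X3 Z1 Z2 Z3 Z4 W)
         (Z4 + t * VZ4 m eps X1 X2 X3 Z1 Z2 Z3 Z4 W)
         (W + t * VW m eps X1 X2 X3 Z1 Z2 Z3 Z4 W).

(* On the level set F_2 = 0 put s = sqrt(Z2/Z1), so that Z2 = Z1 s^2 and
   X1 = X2 + 2 s (1 - Z1).  Using logarithmic derivatives of Z1 and Z2 along V,
   <grad F_2, V> collapses to (1 - Z1) (2 s (1 - X2 - 2 s) + 4 m Z3).  The
   inequality Q <= 0 bounds X1^2 + 2 X2^2 + (8 - 2 Z1) Z2 by 1, and on the
   level set this quantity equals (X2 + 2s)^2 + 2 (X2 + 2s - (Z1 + 2) s)^2,
   whence X2 + 2 s <= 1.  When Z2 = 0 the point is an equilibrium of F_2. *)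

From Stdlib Require Import Reals Lra Psatz.
From Coquelicot Require Import Coquelicot.
Open Scope R_scope.

Lemma sqrt_mul_scaled (a b : R) :
  0 < a -> 0 <= b -> sqrt (a * b) = a * sqrt (b / a).
Proof.
  intros Ha Hb.
  replace (a * b) with (a ^ 2 * (b / a)) by (field; lra).
  rewrite sqrt_mult_alt, sqrt_pow2; [reflexivity | lra | apply pow2_ge_0].
Qed.

Lemma le_of_sq_eq_mul (a b c : R) :
  0 <= a -> 0 <= c -> c <= b -> a ^ 2 = b * c -> c <= a.
Proof. intros; nra. Qed.

Lemma Rsf_eq (m : nat) (Z1 Z2 Z3 Z4 : R) :
  Rsf m Z1 Z2 Z3 Z4
  = (8 - 2 * Z1) * Z2 + 4 * INR m * ((4 * INR m + 8) * Z4 - (Z1 + 2) * Z3).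
Proof. unfold Rsf, R1f, R2f, R3f. ring. Qed.

Lemma RS_energy_bound (m : nat) (eps X1 X2 X3 Z1 Z2 Z3 Z4 W : R) :
  (eps = 0 \/ eps = 1) -> inRS m eps X1 X2 X3 Z1 Z2 Z3 Z4 W ->
  Z1 <= 1 -> Z3 <= Z2 ->
  X1 ^ 2 + 2 * X2 ^ 2 + (8 - 2 * Z1) * Z2 <= 1.
Proof.
  intros Heps [HQ [_ [HW [HZ1 [HZ2 [HZ3 [HZ4 HZ]]]]]]] H1 H23.
  pose proof (pos_INR m) as Hm.
  assert (HZ34 : Z3 <= Z4) by (apply (le_of_sq_eq_mul Z4 Z2 Z3); assumption).
  assert (Hcoupling : 0 <= INR m * ((4 * INR m + 8) * Z4 - (Z1 + 2) * Z3)).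
  { apply Rmult_le_pos; nra. }
  assert (HWterm : 0 <= (nR m - 1) * (eps / 2) * W).
  { unfold nR. apply Rmult_le_pos; [apply Rmult_le_pos|]; lra. }
  assert (HX3 : 0 <= INR m * X3 ^ 2) by (apply Rmult_le_pos; [lra | apply pow2_ge_0]).
  unfold Qf, Gf in HQ. rewrite Rsf_eq in HQ.
  lra.
Qed.

Lemma F2_level_shift_le_1 (X1 X2 Z1 s : R) :
  X1 = X2 + 2 * s * (1 - Z1) ->
  X1 ^ 2 + 2 * X2 ^ 2 + (8 - 2 * Z1) * (Z1 * s ^ 2) <= 1 ->
  X2 + 2 * s <= 1.
Proof.
  intros HX Hbound.
  assert (Hsq : X1 ^ 2 + 2 * X2 ^ 2 + (8 - 2 * Z1) * (Z1 * s ^ 2)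
                = (X2 + 2 * s) ^ 2 + 2 * (X2 + 2 * s - (Z1 + 2) * s) ^ 2).
  { subst X1. ring. }
  pose proof (pow2_ge_0 (X2 + 2 * s - (Z1 + 2) * s)).
  nra.
Qed.

Lemma is_derive_sqrt_logderiv (q : R -> R) (x r : R) :
  is_derive q x (q x * r) -> 0 < q x ->
  is_derive (fun t => sqrt (q t)) x (sqrt (q x) * r / 2).
Proof.
  intros Hq Hpos.
  replace (sqrt (q x) * r / 2) with (q x * r / (2 * sqrt (q x))).
  - exact (is_derive_sqrt q x _ Hq Hpos).
  - assert (Hs : 0 < sqrt (q x)) by now apply sqrt_lt_R0.
    rewrite <- (sqrt_sqrt (q x)) at 1 by lra. field. lra.
Qed.

Lemma is_derive_Ff_line (l x1 x2 z1 z2 v1 v2 w1 w2 : R) (a b c d : R -> R) :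
  0 < z1 -> 0 < z2 ->
  is_derive
    (fun t => Ff l (x1 + t * v1) (x2 + t * v2) (a t) (z1 + t * w1)
                 (z2 + t * w2) (b t) (c t) (d t)) 0
    (v2 - v1 + l / 2 * (sqrt (z2 / z1) * (w2 / z2 - w1 / z1)
                        - sqrt (z1 * z2) * (w1 / z1 + w2 / z2))).
Proof.
  intros Hz1 Hz2.
  pose proof (is_derive_sqrt_logderiv (fun t => (z2 + t * w2) / (z1 + t * w1)) 0
                (w2 / z2 - w1 / z1)) as Hquot.
  pose proof (is_derive_sqrt_logderiv (fun t => (z1 + t * w1) * (z2 + t * w2)) 0
                (w1 / z1 + w2 / z2)) as Hprod.
  cbv beta in Hquot, Hprod; rewrite !Rmult_0_l, !Rplus_0_r in Hquot, Hprod.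
  assert (Hlin : is_derive (fun t => x2 + t * v2 - (x1 + t * v1)) 0 (v2 - v1)).
  { auto_derive; [exact I | ring]. }
  assert (Hquot_pos : 0 < z2 / z1) by (apply Rdiv_lt_0_compat; lra).
  assert (Hprod_pos : 0 < z1 * z2) by (apply Rmult_lt_0_compat; lra).
  pose proof (is_derive_plus _ _ _ _ _ Hlin
    (is_derive_scal _ _ l _ (is_derive_minus _ _ _ _ _
       (Hquot ltac:(auto_derive; [lra | field; lra]) Hquot_pos)
       (Hprod ltac:(auto_derive; [exact I | field; lra]) Hprod_pos)))) as H.
  replace (v2 - v1 + _) with
    (plus (v2 - v1) (l * minus (sqrt (z2 / z1) * (w2 / z2 - w1 / z1) / 2)
                               (sqrt (z1 * z2) * (w1 / z1 + w2 / z2) / 2))).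
  - exact H.
  - unfold minus, plus, opp; simpl. unfold plus; simpl. field. lra.
Qed.

(* Along V, VZ1/Z1 = 2 (X1 - X2) and VZ2/Z2 = 2 (G - eps W/2 - X2), so the
   coordinates X3, Z4, W enter only through G - eps W/2, which cancels. *)
Lemma F2_derivative_on_level (m : nat) (eps X1 X2 X3 Z1 Z3 Z4 W s : R) :
  0 < Z1 -> 0 < s -> X1 = X2 + 2 * s * (1 - Z1) ->
  let Z2 := Z1 * s ^ 2 in
  VX2 m eps X1 X2 X3 Z1 Z2 Z3 Z4 W - VX1 m eps X1 X2 X3 Z1 Z2 Z3 Z4 W
  + 2 / 2 * (s * (VZ2 m eps X1 X2 X3 Z1 Z2 Z3 Z4 W / Z2
                  - VZ1 m eps X1 X2 X3 Z1 Z2 Z3 Z4 W / Z1)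
             - Z1 * s * (VZ1 m eps X1 X2 X3 Z1 Z2 Z3 Z4 W / Z1
                         + VZ2 m eps X1 X2 X3 Z1 Z2 Z3 Z4 W / Z2))
  = (1 - Z1) * (2 * s * (1 - X2 - 2 * s) + 4 * INR m * Z3).
Proof.
  intros HZ1 Hs HX Z2. subst Z2 X1.
  unfold VX1, VX2, VZ1, VZ2, R1f, R2f.
  field. lra.
Qed.

Lemma is_derive_dirF_degenerate (m : nat) (eps l X X3 Z1 Z4 W : R) :
  is_derive (dirF m eps l X X X3 Z1 0 0 Z4 W) 0 0.
Proof.
  apply (is_derive_ext (fun _ : R => 0 : R)).
  - intro t. unfold dirF, Ff, VX1, VX2, VZ2, R1f, R2f.
    rewrite !Rmult_0_r, !Rmult_0_l, !Rplus_0_l, !Rmult_0_r, Rdiv_0_l, sqrt_0.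
    simpl. ring.
  - exact (is_derive_const (0 : R) 0).
Qed.

Theorem proposition4p1 :
  forall (m : nat), (1 <= m)%nat ->
  forall (eps : R), (eps = 0 \/ eps = 1) ->
  forall X1 X2 X3 Z1 Z2 Z3 Z4 W : R,
    inRS m eps X1 X2 X3 Z1 Z2 Z3 Z4 W ->
    0 <= 1 - Z1 ->
    0 < Z1 ->
    Ff 2 X1 X2 X3 Z1 Z2 Z3 Z4 W = 0 ->
    0 <= Z2 - Z3 ->
    0 <= X1 ->
    exists d : R,
      is_derive (dirF m eps 2 X1 X2 X3 Z1 Z2 Z3 Z4 W) 0 d /\ 0 <= d.
Proof.
  intros m _ eps Heps X1 X2 X3 Z1 Z2 Z3 Z4 W HRS HZ1le HZ1 HF H23 _.
  pose proof (RS_energy_bound m eps X1 X2 X3 Z1 Z2 Z3 Z4 W Heps HRS ltac:(lra) ltac:(lra))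
    as Henergy.
  destruct HRS as [_ [_ [_ [_ [HZ2 [HZ3 _]]]]]].
  destruct (Rle_lt_or_eq_dec 0 Z2 HZ2) as [HZ2pos | <-].
  - set (s := sqrt (Z2 / Z1)).
    assert (Hs : 0 < s) by (apply sqrt_lt_R0, Rdiv_lt_0_compat; lra).
    assert (HZ2s : Z2 = Z1 * s ^ 2).
    { unfold s. rewrite pow2_sqrt by (apply Rlt_le, Rdiv_lt_0_compat; lra).
      field. lra. }
    assert (Hprod : sqrt (Z1 * Z2) = Z1 * s) by (apply sqrt_mul_scaled; lra).
    assert (HX : X1 = X2 + 2 * s * (1 - Z1)) by (unfold Ff in HF; fold s in HF; lra).
    eexists. split.
    + apply is_derive_Ff_line; lra.
    + fold s. rewrite Hprod, HZ2s, F2_derivative_on_level by lra.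
      rewrite HZ2s in Henergy.
      pose proof (F2_level_shift_le_1 X1 X2 Z1 s HX Henergy).
      pose proof (pos_INR m).
      apply Rmult_le_pos; nra.
  - assert (HZ30 : Z3 = 0) by lra. subst Z3.
    assert (HX : X2 = X1) by (unfold Ff in HF; rewrite Rmult_0_r, Rdiv_0_l, sqrt_0 in HF; lra).
    subst X2.
    exists 0. split; [apply is_derive_dirF_degenerate | lra].
Qed.
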